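(* Let $n$ be a positive integer and $k$ an even integer with $n/2+1\le k\le n-1$. Then $H_{n,k}$ is a core.
   Context: $H_{n,k}$ is the graph whose vertices are the even-weight elements of $\mathbb{Z}_2^n$, with $x\sim y$ iff $x$ and $y$ differ in exactly $k$ coordinates. A graph is a core if every homomorphism (adjacency-preserving map) from it to itself is an automorphism. *)

From mathcomp Require Import all_boot.
Set Implicit Arguments. Unset Strict Implicit. Unset Printing Implicit Defensive.

Definition hweight (n : nat) (x : {ffun 'I_n -> bool}) : nat := #|[set i | x i]|.

Definition hdist (n : nat) (x y : {ffun 'I_n -> bool}) : nat :=
  #|[set i | x i != y i]|.

Definition even_vec (n : nat) : pred {ffun 'I_n -> bool} :=
  fun x => ~~ odd (@hweight n x).

Definition Hvert (n : nat) := {x : {ffun 'I_n -> bool} | @even_vec n x}.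

Definition Hadj (n k : nat) (x y : Hvert n) : bool := hdist (val x) (val y) == k.

Definition is_hom (T : finType) (e : rel T) (f : T -> T) : Prop :=
  forall x y, e x y -> e (f x) (f y).

Definition is_aut (T : finType) (e : rel T) (f : T -> T) : Prop :=
  bijective f /\ (forall x y, e x y = e (f x) (f y)).

Definition is_core (T : finType) (e : rel T) : Prop :=
  forall f : T -> T, is_hom e f -> is_aut e f.

From mathcomp Require Import all_boot all_order all_algebra.
From mathcomp Require Import zify ring lra.
Set Implicit Arguments. Unset Strict Implicit. Unset Printing Implicit Defensive.
Import Order.TTheory GRing.Theory Num.Theory.

(* On all of
   Z_2^n the distance-k adjacency is diagonal in the characters chi_u, with the
   Krawtchouk value K_k(|u|) as eigenvalue.  For even k > n/2 the least eigenvalue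
   is K_k(1) = K_k(n-1) = C(n,k)(n-2k)/n, attained only at weights 1 and n-1: by
   duality C(n,j) K_k(j) = C(n,k) K_j(k), and K_j(k) is the j-th coefficient of
   (1-x^2)^(n-k) (1-x)^(2k-n), whose coefficients are bounded by C(n,j)(2k-n)/n
   by induction on n-k.
   Given an endomorphism f, extend it to Z_2^n through an even neighbour and put
   g_i(x) = (-1)^(f(x)_i).  As f maps edges to edges, sum_x g_i(x) g_i(x+s),
   summed over i, equals 2^n (n-2k) for every s of weight k: the Rayleigh
   quotients of the g_i average to the least eigenvalue, so every g_i lives on
   the characters of weight 1 and n-1.  Hence y |-> sum_i g_i(x) g_i(x+y)
   = n - 2 d(f x, f(x+y)) is, on even y, a combination sum_j D_j (-1)^(y_j);
   its values n at y = 0 and n - 2k on weight-k vectors force all D_j = 1, so f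
   preserves Hamming distance and is an automorphism. *)

Lemma mul_bin2 n : 'C(n, 2) * 2 = n * n.-1.
Proof. by rewrite mulnC -mul_bin_diag bin1. Qed.

Lemma ltn_bin2_cross d N : 0 < d <= N -> 'C(d, 2) * N.+2 < 'C(N.+2, 2) * d.
Proof.
move=> d_range; rewrite -(ltn_pmul2r (isT : 0 < 2)).
rewrite mulnAC mul_bin2 [X in _ < X]mulnAC mul_bin2 /=; nia.
Qed.

Lemma ltn_succ_bin2_cross d m : 2 <= d -> m.+1 * (2 * m + d).+2 < 'C((2 * m + d).+2, 2) * d.
Proof.
move=> d_ge2; rewrite -(ltn_pmul2r (isT : 0 < 2)) [X in _ < X]mulnAC mul_bin2 /=.
nia.
Qed.

Lemma ltn_bin2_cross_top d N : 2 <= d -> 0 < N ->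
  (N + 'C(N, 2) * d) * N.+2 < 'C(N.+2, 2) * d * N.
Proof.
move=> d_ge2 N_gt0; rewrite -(ltn_pmul2r (isT : 0 < 2)).
have -> : (N + 'C(N, 2) * d) * N.+2 * 2 = (N * 2 + 'C(N, 2) * 2 * d) * N.+2 by ring.
have -> : 'C(N.+2, 2) * d * N * 2 = 'C(N.+2, 2) * 2 * d * N by ring.
by rewrite !mul_bin2 /=; nia.
Qed.

Lemma ltn_binSS_cross N i : i.+2 <= N ->
  ('C(N, i.+2) + 'C(N, i)) * N.+2 < 'C(N.+2, i.+2) * N.
Proof.
move=> le_iN; have e1 := mul_bin_left N i.+1; have e2 := mul_bin_left N i.
have : 0 < 'C(N, i.+1) by rewrite bin_gt0; lia.
rewrite !binS; set A := 'C(N, i.+2) in e1 *; set B := 'C(N, i) in e2 *.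
set M := 'C(N, i.+1) in e1 e2 * => M_gt0.
have : 2 * A <= (N - 1) * M by nia.
have : 2 * B <= (N - 1) * M by nia.
nia.
Qed.

Local Open Scope ring_scope.

Lemma ltr_nat_frac (R : numFieldType) (a b c e : nat) : (0 < b)%N -> (0 < e)%N ->
  (a%:R / b%:R < c%:R / e%:R :> R) = (a * e < c * b)%N.
Proof.
move=> b_gt0 e_gt0.
by rewrite ltr_pdivlMr ?ltr0n // mulrAC ltr_pdivrMr ?ltr0n // -!natrM ltr_nat.
Qed.

Lemma coef_lin_exp (R : comNzRingType) (c : R) d j :
  ((1 + c *: 'X) ^+ d)`_j = c ^+ j * ('C(d, j))%:R.
Proof.
elim: d j => [|d IHd] j.
  by rewrite expr0 coef1; case: j => [|j]; rewrite ?expr0 ?mul1r // bin0n mulr0.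
rewrite exprS mulrDl mul1r coefD -scalerAl coefZ coefXM.
case: j => [|j]; first by rewrite /= mulr0 addr0 IHd !expr0 !bin0.
by rewrite /= !IHd binS natrD mulrDr exprS mulrA.
Qed.

(* With d = 2k - n and m = n - k, kcoef d m j is the dual Krawtchouk value K_j(k). *)
Definition kcoef (d m j : nat) : rat := ((1 - 'X^2) ^+ m * (1 - 'X) ^+ d : {poly rat})`_j.

Lemma kcoef0 d j : kcoef d 0 j = (-1) ^+ j * ('C(d, j))%:R.
Proof. by rewrite /kcoef expr0 mul1r -scaleN1r coef_lin_exp. Qed.

Lemma kcoefS d m j :
  kcoef d m.+1 j = kcoef d m j - (if j is j'.+2 then kcoef d m j' else 0).
Proof.
rewrite /kcoef exprS -mulrA mulrBl mul1r coefB coefXnM.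
by case: j => [|[|j]] //=; rewrite subn2.
Qed.

Lemma kcoef_at0 d m : kcoef d m 0 = 1.
Proof. by elim: m => [|m IHm]; rewrite ?kcoefS ?IHm ?subr0 // kcoef0 bin0 mulr1. Qed.

Lemma kcoef_at1 d m : kcoef d m 1 = - d%:R.
Proof. by elim: m => [|m IHm]; rewrite ?kcoefS ?IHm ?subr0 // kcoef0 bin1 mulN1r. Qed.

Lemma kcoef_at2 d m : kcoef d m 2 = ('C(d, 2))%:R - m%:R.
Proof.
elim: m => [|m IHm]; first by rewrite kcoef0 expr2 mulrNN mul1r subr0.
by rewrite kcoefS IHm kcoef_at0 -addrA -opprD -natr1.
Qed.

Lemma kcoef_gt d m j : (2 * m + d < j)%N -> kcoef d m j = 0.
Proof.
elim: m j => [|m IHm] j j_gt; first by rewrite kcoef0 bin_small ?mulr0 //; lia.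
rewrite kcoefS; case: j j_gt => [|[|j]] j_gt; try lia.
by rewrite !IHm ?subr0 //; lia.
Qed.

Lemma kcoef_top d m : kcoef d m (2 * m + d) = (-1) ^+ (m + d).
Proof.
elim: m => [|m IHm]; first by rewrite kcoef0 add0n binn mulr1.
have -> : (2 * m.+1 + d = (2 * m + d).+2)%N by lia.
by rewrite kcoefS IHm kcoef_gt ?sub0r ?exprS ?mulN1r //; lia.
Qed.

Section KcoefBound.
Variable d : nat.
Hypothesis d_ge2 : (2 <= d)%N.

Local Notation bnd N j := (('C(N, j) * d)%:R / N%:R : rat).

Section Step.
Variable m : nat.
Local Notation N := (2 * m + d)%N.
Hypothesis kcoef_le_m : forall j, (0 < j < N)%N -> `|kcoef d m j| <= bnd N j.

Lemma kcoefS_lt_2 : `|kcoef d m.+1 2| < bnd N.+2 2.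
Proof.
rewrite kcoef_at2 ltr_norml.
have lt_frac a : (a * N.+2 < 'C(N.+2, 2) * d)%N -> a%:R < bnd N.+2 2.
  by move=> lt_a; rewrite ltr_pdivlMr ?ltr0n // -natrM ltr_nat.
have /ltn_bin2_cross/lt_frac lt_d : (0 < d <= N)%N by lia.
have /lt_frac lt_m := ltn_succ_bin2_cross m d_ge2.
have C_ge0 := ler0n rat 'C(d, 2); have m_ge0 := ler0n rat m.+1.
by set b := _ / _ in lt_d lt_m *; apply/andP; split; lra.
Qed.

Lemma kcoefS_lt_mid i : (0 < i)%N -> (i.+2 < N)%N ->
  `|kcoef d m.+1 i.+2| < bnd N.+2 i.+2.
Proof.
move=> i_gt0 i_lt; rewrite kcoefS.
apply: le_lt_trans (ler_normB _ _) _.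
apply: le_lt_trans (lerD (kcoef_le_m _) (kcoef_le_m _)) _; try lia.
rewrite -mulrDl -natrD -mulnDl ltr_nat_frac //; last lia.
rewrite mulnAC [X in (_ < X)%N]mulnAC ltn_pmul2r; last lia.
apply: ltn_binSS_cross; lia.
Qed.

Lemma kcoefS_lt_top : (2 < N)%N -> `|kcoef d m.+1 N| < bnd N.+2 N.
Proof.
move=> N_gt2; have [i Ni] : exists i, N = i.+2 by exists (N - 2)%N; lia.
rewrite {1}Ni kcoefS -Ni kcoef_top.
apply: le_lt_trans (ler_normB _ _) _.
apply: le_lt_trans (lerD (le_refl _) (kcoef_le_m _)) _; first lia.
rewrite normr_sign -[X in X + _](@divff _ N%:R) ?pnatr_eq0; last lia.
rewrite -mulrDl -natrD ltr_nat_frac //; last lia.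
have -> : i = (N - 2)%N by lia.
have -> : 'C(N.+2, N) = 'C(N.+2, 2) by rewrite -[RHS]bin_sub // !subSS subn0.
rewrite bin_sub; last lia.
apply: ltn_bin2_cross_top; lia.
Qed.

Lemma kcoefS_lt j : (1 < j < N.+1)%N -> `|kcoef d m.+1 j| < bnd N.+2 j.
Proof.
move=> j_range; have [->|ne2] := eqVneq j 2%N; first exact: kcoefS_lt_2.
have [jN|neN] := eqVneq j N; first by rewrite jN; apply: kcoefS_lt_top; lia.
have [i ji] : exists i, j = i.+2 by exists (j - 2)%N; lia.
subst j; apply: kcoefS_lt_mid; lia.
Qed.

End Step.

Let natr_mulKn N : (0 < N)%N -> (N * d)%:R / N%:R = d%:R :> rat.
Proof. by move=> N_gt0; rewrite natrM mulrAC divff ?mul1r // pnatr_eq0 -lt0n. Qed.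

Lemma kcoef_le m j : (0 < j < 2 * m + d)%N -> `|kcoef d m j| <= bnd (2 * m + d) j.
Proof.
elim: m j => [|m IHm] j j_range.
  by rewrite kcoef0 normrM normr_sign mul1r normr_nat natrM mulfK // pnatr_eq0; lia.
have -> : (2 * m.+1 + d = (2 * m + d).+2)%N by lia.
have [->|ne1] := eqVneq j 1%N; first by rewrite kcoef_at1 normrN normr_nat bin1 natr_mulKn.
have [jN1|neN1] := eqVneq j (2 * m + d).+1; last first.
  by apply/ltW/kcoefS_lt => //; lia.
have [i Ni] : exists i, (2 * m + d)%N = i.+1 by exists (2 * m + d).-1; lia.
rewrite jN1 {1}Ni kcoefS kcoef_gt ?sub0r ?normrN; last lia.
apply: le_trans (IHm i _) _; first lia.
by rewrite Ni !binSn !natr_mulKn.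
Qed.

Lemma kcoef_lt m j : (0 < m)%N -> (1 < j < (2 * m + d).-1)%N ->
  `|kcoef d m j| < bnd (2 * m + d) j.
Proof.
case: m => // m _ j_range; have -> : (2 * m.+1 + d = (2 * m + d).+2)%N by lia.
by apply: kcoefS_lt => [i|]; [exact: kcoef_le | lia].
Qed.

End KcoefBound.

Notation bvec n := {ffun 'I_n -> bool}.

Section Weight.
Variable n : nat.
Implicit Types (x y s : bvec n) (A : {set 'I_n}).

Lemma bvec_opp x : - x = x.
Proof. by apply/ffunP => i; rewrite ffunE. Qed.

Lemma bvec_addxx s : s + s = 0.
Proof. by rewrite -{2}(bvec_opp s) subrr. Qed.

Lemma hdistE x y : hdist x y = hweight (x + y).
Proof. by apply: eq_card => i; rewrite !inE ffunE negb_eqb. Qed.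

Lemma hweightE x : hweight x = (\sum_i x i)%N.
Proof. by rewrite /hweight -sum1_card big_mkcond; apply: eq_bigr => i _; rewrite inE. Qed.

Lemma hweight_le x : (hweight x <= n)%N.
Proof. by rewrite /hweight -[X in (_ <= X)%N](card_ord n) max_card. Qed.

Lemma hweight_eq0 x : (hweight x == 0%N) = (x == 0).
Proof.
rewrite cards_eq0; apply/eqP/eqP => [x0|->].
  by apply/ffunP => i; move/setP/(_ i): x0; rewrite !inE ffunE.
by apply/setP => i; rewrite !inE ffunE.
Qed.

Lemma hdist_eq0 x y : (hdist x y == 0%N) = (x == y).
Proof. by rewrite hdistE hweight_eq0 addr_eq0 bvec_opp. Qed.

Lemma hweight0 : hweight (0 : bvec n) = 0%N.
Proof. by apply/eqP; rewrite hweight_eq0. Qed.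

Lemma hdistxx x : hdist x x = 0%N.
Proof. by apply/eqP; rewrite hdist_eq0. Qed.

Lemma odd_hweightD x y : odd (hweight (x + y)) = odd (hweight x) (+) odd (hweight y).
Proof.
apply: (@signr_inj int); rewrite /= signr_addb !signr_odd !hweightE -!prodrXr.
by rewrite -big_split; apply: eq_bigr => i _; rewrite ffunE signr_addb.
Qed.

Definition setv A : bvec n := [ffun i => i \in A].
Definition unitv j : bvec n := setv [set j].
Definition onesv : bvec n := setv setT.

Lemma hweight_setv A : hweight (setv A) = #|A|.
Proof. by apply: eq_card => i; rewrite !inE ffunE. Qed.

Lemma hweight_unitv j : hweight (unitv j) = 1%N.
Proof. by rewrite hweight_setv cards1. Qed.

Lemma hweight_onesD x : hweight (onesv + x) = (n - hweight x)%N.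
Proof.
rewrite -[X in (X - _)%N](card_ord n) -(cardsC [set i | x i]) addKn.
apply: eq_card => i.
by rewrite !inE !ffunE inE.
Qed.

Lemma card_bvec : #|{: bvec n}| = (2 ^ n)%N.
Proof. by rewrite card_ffun card_bool card_ord. Qed.

Lemma setvK : cancel (fun x => [set i | x i]) setv.
Proof. by move=> x; apply/ffunP => i; rewrite ffunE inE. Qed.

Lemma card_hweight j : #|[pred x : bvec n | hweight x == j]| = 'C(n, j).
Proof.
rewrite -[n in RHS](card_ord n) -card_draws -(card_imset _ (can_inj setvK)).
apply: eq_card => A; rewrite inE; apply/imsetP/idP => [[x wx ->] //|card_A].
by exists (setv A); rewrite ?inE ?hweight_setv //; apply/setP => i; rewrite inE ffunE.
Qed.

Definition evenize i0 x := if odd (hweight x) then x + unitv i0 else x.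

Lemma even_evenize i0 x : even_vec (evenize i0 x).
Proof.
rewrite /even_vec /evenize; case: ifP => [odd_x|-> //].
by rewrite odd_hweightD hweight_unitv odd_x.
Qed.

Lemma evenize_id i0 x : even_vec x -> evenize i0 x = x.
Proof. by rewrite /evenize /even_vec => /negbTE ->. Qed.

Lemma evenizeD i0 x s : ~~ odd (hweight s) -> evenize i0 (x + s) = evenize i0 x + s.
Proof.
move=> /negbTE s_even; rewrite /evenize odd_hweightD s_even addbF.
by case: ifP; rewrite // addrAC.
Qed.

End Weight.
Arguments onesv {n}.

Section Characters.
Variables (R : comNzRingType) (n : nat).
Implicit Types (x y z u v s : bvec n) (g h : bvec n -> R).

Definition chi u x : R := \prod_i (-1) ^+ (u i && x i).

Definition hat g u := \sum_x g x * chi u x.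

Lemma chiC u x : chi u x = chi x u.
Proof. by apply: eq_bigr => i _; rewrite andbC. Qed.

Lemma chiD u x y : chi u (x + y) = chi u x * chi u y.
Proof. by rewrite -big_split; apply: eq_bigr => i _; rewrite ffunE andb_addr signr_addb. Qed.

Lemma chiDl u v x : chi (u + v) x = chi u x * chi v x.
Proof. by rewrite chiC chiD !(chiC x). Qed.

Lemma chi0 u : chi u 0 = 1.
Proof. by rewrite /chi big1 // => i _; rewrite ffunE andbF. Qed.

Lemma chi_unitv j x : chi (unitv j) x = (-1) ^+ x j.
Proof.
rewrite /chi (bigD1 j) //= big1 ?mulr1 => [|i /negbTE ij]; rewrite ffunE inE ?ij //.
by rewrite eqxx.
Qed.

Lemma chi_onesv x : chi onesv x = (-1) ^+ hweight x.
Proof. by rewrite hweightE -prodrXr; apply: eq_bigr => i _; rewrite ffunE inE. Qed.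

Lemma sum_sign_bvec (z : bvec n) :
  \sum_i (-1) ^+ z i = n%:R - 2 * (hweight z)%:R :> R.
Proof.
under eq_bigr do rewrite signrE -mul2n natrM.
by rewrite sumrB sumr_const card_ord -mulr_sumr -natr_sum -hweightE.
Qed.

Lemma sum_sign_setv (D : 'I_n -> R) A :
  \sum_j D j * (-1) ^+ setv A j = \sum_j D j - 2 * \sum_(j in A) D j.
Proof.
rewrite (bigID (mem A)) [in RHS](bigID (mem A)) /=.
under eq_bigr => j jA do rewrite ffunE jA mulrN1.
under [X in _ + X]eq_bigr => j /negbTE jA do rewrite ffunE jA mulr1.
by rewrite sumrN; ring.
Qed.

Lemma sum_chi v : \sum_u chi u v = (2 ^ n)%:R * (v == 0)%:R.
Proof.
rewrite -(bigA_distr_bigA (fun i (b : bool) => (-1) ^+ (b && v i) : R)) /=.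
under eq_bigr => i _ do rewrite big_bool /= expr0.
have [->|] := eqVneq v 0.
  rewrite mulr1 (eq_bigr (fun=> 2%:R)) => [|i _]; last by rewrite ffunE.
  by rewrite prodr_const card_ord natrX.
rewrite -hweight_eq0 -lt0n => /card_gt0P[i]; rewrite inE => v_i.
by rewrite mulr0 (bigD1 i) //= v_i expr1 addNr mul0r.
Qed.

Lemma sum_chiD x z : \sum_u chi u x * chi u z = (2 ^ n)%:R * (x == z)%:R.
Proof. by under eq_bigr do rewrite -chiD; rewrite sum_chi addr_eq0 bvec_opp. Qed.

Lemma hat_inv g z : \sum_u hat g u * chi u z = (2 ^ n)%:R * g z.
Proof.
under eq_bigr do rewrite mulr_suml; rewrite exchange_big /=.
under eq_bigr => x _ do under eq_bigr do rewrite -mulrA.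
under eq_bigr do rewrite -mulr_sumr sum_chiD.
rewrite (bigD1 z) //= eqxx big1 => [|x /negbTE ->]; last by rewrite !mulr0.
by rewrite mulr1 addr0 mulrC.
Qed.

Lemma hat_plancherel g h : \sum_u hat g u * hat h u = (2 ^ n)%:R * \sum_x g x * h x.
Proof.
under eq_bigr do rewrite [hat h _]/hat mulr_sumr.
rewrite exchange_big mulr_sumr /=; apply: eq_bigr => x _.
under eq_bigr do rewrite mulrCA.
by rewrite -mulr_sumr hat_inv mulrCA [h x * _]mulrC.
Qed.

Lemma hat_shift g s u : hat (fun x => g (x + s)) u = chi u s * hat g u.
Proof.
rewrite /hat mulr_sumr (reindex_inj (addIr s)) /=; apply: eq_bigr => x _.
by rewrite -addrA bvec_addxx addr0 chiD mulrA mulrC.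
Qed.

Lemma hat_parseval g s :
  \sum_u hat g u * hat g u * chi u s = (2 ^ n)%:R * \sum_x g x * g (x + s).
Proof.
by rewrite -hat_plancherel; apply: eq_bigr => u _; rewrite hat_shift mulrCA mulrC.
Qed.

Lemma unitv_inj : injective (@unitv n).
Proof. by move=> j l /ffunP/(_ j); rewrite !ffunE !inE eqxx => /esym/eqP. Qed.

Lemma sum_hweight1 (G : bvec n -> R) :
  \sum_(u | hweight u == 1%N) G u = \sum_j G (unitv j).
Proof.
have -> : \sum_(u | hweight u == 1%N) G u = \sum_(u in [set unitv j | j in setT]) G u.
  apply: eq_bigl => u; apply/idP/imsetP => [/cards1P[j u_j]|[j _ ->]].
    by exists j => //; apply/ffunP => i; move/setP/(_ i): u_j; rewrite !ffunE !inE.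
  by rewrite hweight_unitv.
by rewrite big_imset /=; [apply: eq_bigl => j; rewrite inE | move=> ? ? _ _ /unitv_inj].
Qed.

Lemma sum_hweight_pred (G : bvec n -> R) : (0 < n)%N ->
  \sum_(u | hweight u == n.-1) G u = \sum_j G (onesv + unitv j).
Proof.
move=> n_gt0; rewrite (reindex_inj (addrI onesv)) -(sum_hweight1 (G \o +%R onesv)) /=.
by apply: eq_bigl => u; rewrite hweight_onesD; have := hweight_le u; lia.
Qed.

Lemma hat_supp_expand h x : (2 < n)%N ->
  (forall u, hweight u != 1%N -> hweight u != n.-1 -> hat h u = 0) ->
  exists D : 'I_n -> R, forall y, ~~ odd (hweight y) ->
    (2 ^ n)%:R * h (x + y) = \sum_j D j * (-1) ^+ y j.
Proof.
move=> n_gt2 h_supp; pose c u := hat h u * chi u x.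
exists (fun j => c (unitv j) + c (onesv + unitv j)) => y y_even.
rewrite -hat_inv (bigID (fun u => hweight u == 1%N)) /= sum_hweight1.
rewrite [X in _ + X](bigID (fun u => hweight u == n.-1)) /=.
rewrite [X in _ + (_ + X)]big1 ?addr0 => [|u /andP[w1 wn1]]; last by rewrite h_supp ?mul0r.
rewrite (eq_bigl (fun u => hweight u == n.-1)) => [|u]; last first.
  have n1_ne1 : (n.-1 == 1%N) = false by apply/eqP; lia.
  by case: eqP => // ->; rewrite eq_sym n1_ne1.
rewrite sum_hweight_pred; last lia.
rewrite -big_split; apply: eq_bigr => j _ /=.
rewrite /c !chiD !chiDl [chi onesv y]chi_onesv -signr_odd (negbTE y_even).
rewrite !chi_unitv expr0 mul1r.
set a := (-1) ^+ x j; set b := (-1) ^+ y j; ring.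
Qed.

End Characters.
Arguments chi {R n}.

Section Krawtchouk.
Variables (R : comNzRingType) (n : nat).
Implicit Types (u s : bvec n).

Definition kraw_poly j : {poly R} := (1 - 'X) ^+ j * (1 + 'X) ^+ (n - j).

Lemma chi_gen_poly u : \sum_s chi u s *: 'X^(hweight s) = kraw_poly (hweight u).
Proof.
transitivity (\sum_(s : bvec n) \prod_i ((-1) ^+ (u i && s i) *: 'X^(s i) : {poly R})).
  by apply: eq_bigr => s _; rewrite /chi hweightE -prodrXr -scaler_prod.
rewrite -(bigA_distr_bigA (fun i b => (-1) ^+ (u i && b) *: 'X^b : {poly R})) /=.
under eq_bigr => i _ do rewrite big_bool /= andbT andbF expr0 scale1r.
rewrite (bigID (fun i => u i)) /=.
under eq_bigr => i -> do rewrite expr1 scaleN1r addrC.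
under [X in _ * X]eq_bigr => i /negbTE -> do rewrite scale1r addrC.
rewrite !prodr_const /kraw_poly /hweight cardsE; congr (_ * _ ^+ _).
by rewrite -[X in (X - _)%N](card_ord n) -(cardC u) addKn.
Qed.

Lemma sum_chi_hweight u k :
  \sum_(s : bvec n | hweight s == k) chi u s = (kraw_poly (hweight u))`_k.
Proof. by rewrite -chi_gen_poly coef_sumMXn. Qed.

Lemma sum_const_hweight j (c : R) : \sum_(u : bvec n | hweight u == j) c = ('C(n, j))%:R * c.
Proof. by rewrite sumr_const card_hweight mulr_natl. Qed.

Lemma kraw_dual j k : ('C(n, j))%:R * (kraw_poly j)`_k = ('C(n, k))%:R * (kraw_poly k)`_j.
Proof.
transitivity
  (\sum_(u : bvec n | hweight u == j) \sum_(s : bvec n | hweight s == k) chi u s : R).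
  by rewrite -sum_const_hweight; apply: eq_bigr => u /eqP <-; rewrite sum_chi_hweight.
rewrite exchange_big -sum_const_hweight; apply: eq_bigr => s /eqP <- /=.
by under eq_bigr do rewrite chiC; rewrite sum_chi_hweight.
Qed.

End Krawtchouk.

Section EigenvalueBound.
Variables n k : nat.
Hypotheses (k_even : ~~ odd k) (k_gt : (n + 2 <= 2 * k)%N) (k_lt : (k <= n - 1)%N).

Local Notation m := (n - k)%N.
Local Notation d := (k - (n - k))%N.

Let n_eq : n = (2 * m + d)%N.
Proof. lia. Qed.

Let d_ge2 : (2 <= d)%N.
Proof. lia. Qed.

Let m_gt0 : (0 < m)%N.
Proof. lia. Qed.

Definition eig (u : bvec n) : rat := \sum_(s : bvec n | hweight s == k) chi u s.

Definition eig_min : rat := ('C(n, k))%:R * (n%:R - 2 * k%:R) / n%:R.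

Lemma kraw_poly_split : kraw_poly rat n k = (1 - 'X^2) ^+ m * (1 - 'X) ^+ d.
Proof.
rewrite /kraw_poly -{1}(subnK (_ : m <= k)%N); last lia.
by rewrite exprD -mulrA -exprMn mulrC; congr (_ ^+ _ * _); ring.
Qed.

Lemma eig_kcoef u : ('C(n, hweight u))%:R * eig u = ('C(n, k))%:R * kcoef d m (hweight u).
Proof. by rewrite /eig sum_chi_hweight kraw_dual kraw_poly_split. Qed.

Lemma kcoef_top_even : kcoef d m n = 1.
Proof.
rewrite [X in kcoef _ _ X]n_eq kcoef_top -signr_odd (_ : (m + d)%N = k) ?(negbTE k_even) //.
lia.
Qed.

Lemma kcoef_bnd_gt0 j : (j <= n)%N -> j != 1%N -> j != n.-1 ->
  0 < kcoef d m j + ('C(n, j) * d)%:R / n%:R.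
Proof.
move=> j_le j_ne1 j_ne; have bnd_ge0 : 0 <= ('C(n, j) * d)%:R / n%:R :> rat.
  by rewrite divr_ge0 ?ler0n.
have [j0 | j_gt0] := posnP j.
  by rewrite {1}j0 kcoef_at0; apply: ltr_wpDr bnd_ge0 ltr01.
have [jn | j_ltn] := eqVneq j n.
  by rewrite {1}jn kcoef_top_even; apply: ltr_wpDr bnd_ge0 ltr01.
have j_mid : (1 < j < (2 * m + d).-1)%N by rewrite -n_eq; lia.
have := kcoef_lt d_ge2 m_gt0 j_mid; rewrite -n_eq ltr_norml => /andP[lt_c _].
by rewrite -ltrBlDr sub0r.
Qed.

Lemma kcoef_bnd_ge0 j : (j <= n)%N -> 0 <= kcoef d m j + ('C(n, j) * d)%:R / n%:R.
Proof.
move=> j_le; have [/andP[j_ne1 j_ne] | ] := boolP ((j != 1%N) && (j != n.-1)).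
  exact/ltW/kcoef_bnd_gt0.
rewrite negb_and !negbK => j_edge.
have j_mid : (0 < j < 2 * m + d)%N by rewrite -n_eq; lia.
have := kcoef_le d_ge2 j_mid; rewrite -n_eq ler_norml => /andP[le_c _].
by rewrite -lerBlDr sub0r.
Qed.

Lemma eig_sub_min u : eig u - eig_min = ('C(n, k))%:R / ('C(n, hweight u))%:R *
  (kcoef d m (hweight u) + ('C(n, hweight u) * d)%:R / n%:R).
Proof.
have Cj_neq0 : ('C(n, hweight u))%:R != 0 :> rat by rewrite pnatr_eq0 -lt0n bin_gt0 hweight_le.
have n_neq0 : n%:R != 0 :> rat by rewrite pnatr_eq0; lia.
have -> : eig u = ('C(n, k))%:R / ('C(n, hweight u))%:R * kcoef d m (hweight u).
  by rewrite mulrAC -eig_kcoef mulrC mulKf.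
by rewrite /eig_min natrM !natrB; [field; apply/andP | lia | lia].
Qed.

Lemma eig_min_le u : eig_min <= eig u.
Proof.
by rewrite -subr_ge0 eig_sub_min mulr_ge0 ?divr_ge0 ?ler0n ?kcoef_bnd_ge0 ?hweight_le.
Qed.

Lemma eig_min_lt u : hweight u != 1%N -> hweight u != n.-1 -> eig_min < eig u.
Proof.
move=> ne1 ne; rewrite -subr_gt0 eig_sub_min mulr_gt0 ?kcoef_bnd_gt0 ?hweight_le //.
by rewrite divr_gt0 ?ltr0n ?bin_gt0 ?hweight_le //; lia.
Qed.

End EigenvalueBound.

Lemma eq_of_subset_sums (V : zmodType) n (D : 'I_n -> V) k c : (0 < k < n)%N ->
  (forall A : {set 'I_n}, #|A| = k -> \sum_(j in A) D j = c) -> forall p q, D p = D q.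
Proof.
move=> k_range sumD p q; have [-> // | pq] := eqVneq p q.
have : (k.-1 <= #|[set~ p] :\ q|)%N.
  by have := cardsD1 q [set~ p]; rewrite !inE eq_sym pq cardsC1 card_ord; lia.
move=> /card_geqP[s [s_uniq s_size s_sub]]; pose B := [set j in s].
have sum_add a : a \notin s -> D a + \sum_(j in B) D j = c.
  move=> a_s; rewrite -big_setU1 ?inE //=; apply: sumD.
  by rewrite cardsU1 inE a_s cardsE (card_uniqP s_uniq); lia.
have p_s : p \notin s by apply/negP => /s_sub; rewrite !inE eqxx andbF.
have q_s : q \notin s by apply/negP => /s_sub; rewrite !inE eqxx.
by apply: (addIr (\sum_(j in B) D j)); rewrite !sum_add.
Qed.

Lemma const_of_sign_sums (R : numFieldType) n k (D : 'I_n -> R) a : (0 < k < n)%N ->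
  \sum_j D j = n%:R * a ->
  (forall s : bvec n, hweight s = k -> \sum_j D j * (-1) ^+ s j = (n%:R - 2 * k%:R) * a) ->
  forall j, D j = a.
Proof.
move=> k_range sumD sumD_k.
have two_neq0 : 2 != 0 :> R by rewrite pnatr_eq0.
have subset_sum (A : {set 'I_n}) : #|A| = k -> \sum_(j in A) D j = k%:R * a.
  move=> card_A; have := sumD_k (setv A); rewrite hweight_setv sum_sign_setv sumD.
  by rewrite mulrBl -mulrA => /(_ card_A)/subrI/(mulfI two_neq0).
have D_const := eq_of_subset_sums k_range subset_sum.
have n_neq0 : n%:R != 0 :> R by rewrite pnatr_eq0; lia.
move=> j; apply: (mulfI n_neq0); rewrite -sumD.
by under eq_bigr do rewrite (D_const _ j); rewrite sumr_const card_ord mulr_natl.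
Qed.

Section HomomorphismIsometry.
Variables n k : nat.
Hypotheses (n_gt0 : (0 < n)%N) (k_even : ~~ odd k) (k_gt : (n + 2 <= 2 * k)%N)
  (k_lt : (k <= n - 1)%N).
Variable f : Hvert n -> Hvert n.
Hypothesis f_hom : is_hom (@Hadj n k) f.

Let i0 : 'I_n := Ordinal n_gt0.

Let vert (x : bvec n) : Hvert n := Sub (evenize i0 x) (even_evenize i0 x).

Let vert_val v : vert (val v) = v.
Proof. by apply: val_inj; rewrite /= evenize_id ?(valP v). Qed.

Let F x := val (f (vert x)).

Let g (i : 'I_n) x : rat := (-1) ^+ F x i.

Lemma hdistF_edge x s : hweight s = k -> hdist (F x) (F (x + s)) = k.
Proof.
move=> wt_s; apply/eqP/f_hom.
by rewrite /Hadj /= evenizeD ?wt_s // hdistE addrA bvec_addxx add0r wt_s.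
Qed.

Lemma g_dot x y : \sum_i g i x * g i y = n%:R - 2 * (hdist (F x) (F y))%:R.
Proof. by rewrite hdistE -sum_sign_bvec; apply: eq_bigr => i _; rewrite ffunE signr_addb. Qed.

Lemma hat_g_eig i : \sum_u hat (g i) u * hat (g i) u * eig k u =
  (2 ^ n)%:R * \sum_(s : bvec n | hweight s == k) \sum_x g i x * g i (x + s).
Proof.
under eq_bigr do rewrite mulr_sumr; rewrite exchange_big mulr_sumr /=.
by apply: eq_bigr => s _; rewrite hat_parseval.
Qed.

Lemma hat_g_norm i : \sum_u hat (g i) u * hat (g i) u = (2 ^ n)%:R * (2 ^ n)%:R.
Proof.
have := hat_parseval (g i) 0; under eq_bigr do rewrite chi0 mulr1; move->.
under eq_bigr do rewrite addr0 -signr_addb addbb.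
by rewrite sumr_const card_bvec /= expr0.
Qed.

Lemma spectral_sum_eq0 :
  \sum_i \sum_u hat (g i) u * hat (g i) u * (eig k u - eig_min n k) = 0.
Proof.
transitivity (\sum_i ((2 ^ n)%:R *
    \sum_(s : bvec n | hweight s == k) \sum_x g i x * g i (x + s)
    - eig_min n k * ((2 ^ n)%:R * (2 ^ n)%:R))).
  apply: eq_bigr => i _; under eq_bigr do rewrite mulrBr.
  by rewrite sumrB hat_g_eig -mulr_suml hat_g_norm [X in _ - X]mulrC.
rewrite sumrB -mulr_sumr exchange_big /=.
rewrite (eq_bigr (fun=> \sum_(x : bvec n) (n%:R - 2 * k%:R))) => [|s /eqP wt_s]; last first.
  by rewrite exchange_big; apply: eq_bigr => x _; rewrite g_dot hdistF_edge.
rewrite sum_const_hweight !sumr_const card_bvec card_ord /eig_min.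
by field; rewrite pnatr_eq0 -lt0n.
Qed.

Lemma hat_g_eq0 i u : hweight u != 1%N -> hweight u != n.-1 -> hat (g i) u = 0.
Proof.
move=> wt_ne1 wt_ne.
have term_ge0 j v : 0 <= hat (g j) v * hat (g j) v * (eig k v - eig_min n k).
  apply: mulr_ge0; first by rewrite -expr2 sqr_ge0.
  by rewrite subr_ge0 (eig_min_le k_even k_gt k_lt).
have sum_ge0 j : true -> 0 <= \sum_v hat (g j) v * hat (g j) v * (eig k v - eig_min n k).
  by move=> _; apply: sumr_ge0 => v _; apply: term_ge0.
have sum_i_eq0 := psumr_eq0P sum_ge0 spectral_sum_eq0 (i := i) isT.
have /eqP := psumr_eq0P (fun v _ => term_ge0 i v) sum_i_eq0 (i := u) isT.
rewrite mulf_eq0 subr_eq0 (gt_eqF (eig_min_lt k_even k_gt k_lt wt_ne1 wt_ne)) orbF.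
by rewrite mulf_eq0 orbb => /eqP.
Qed.

Lemma g_dot_shift x y : ~~ odd (hweight y) ->
  \sum_i g i x * g i (x + y) = n%:R - 2 * (hweight y)%:R.
Proof.
move=> y_even; pose h z := \sum_i g i x * g i z.
have hat_h_eq0 u : hweight u != 1%N -> hweight u != n.-1 -> hat h u = 0.
  move=> wt_ne1 wt_ne; rewrite /hat /h; under eq_bigr do rewrite mulr_suml.
  rewrite exchange_big big1 // => i _.
  by under eq_bigr do rewrite -mulrA; rewrite -mulr_sumr -/(hat (g i) u) hat_g_eq0 ?mulr0.
have [|D hD] := hat_supp_expand x _ hat_h_eq0; first lia.
have two_n_neq0 : (2 ^ n)%:R != 0 :> rat by rewrite pnatr_eq0 expn_eq0.
have D_const : forall j, D j = (2 ^ n)%:R.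
  apply: (const_of_sign_sums (k := k)) => [| | s wt_s]; first lia.
    have := hD 0; rewrite hweight0 addr0 /h g_dot hdistxx mulr0 subr0 mulrC => /(_ isT) ->.
    by apply: eq_bigr => j _; rewrite ffunE mulr1.
  by have := hD s; rewrite wt_s /h g_dot hdistF_edge // mulrC => /(_ k_even) <-.
apply: (mulfI two_n_neq0); rewrite -/(h (x + y)) hD //.
by under eq_bigr do rewrite D_const; rewrite -mulr_sumr sum_sign_bvec.
Qed.

Lemma hom_hdist v w : hdist (val (f v)) (val (f w)) = hdist (val v) (val w).
Proof.
have vw_even : ~~ odd (hweight (val v + val w)).
  by rewrite odd_hweightD (negbTE (valP v)) (negbTE (valP w)).
have := g_dot_shift (val v) vw_even; rewrite addrA bvec_addxx add0r g_dot /F !vert_val -hdistE.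
have two_neq0 : 2 != 0 :> rat by [].
by move=> /addrI/oppr_inj/(mulfI two_neq0)/eqP; rewrite eqr_nat => /eqP.
Qed.

End HomomorphismIsometry.

Local Close Scope ring_scope.

Theorem corollary4p6 (n k : nat) :
  0 < n -> ~~ odd k -> n + 2 <= 2 * k -> k <= n - 1 ->
  is_core (@Hadj n k).
Proof.
move=> n_gt0 k_even k_gt k_lt f f_hom.
have iso := hom_hdist n_gt0 k_even k_gt k_lt f_hom.
split; last by move=> v w; rewrite /Hadj iso.
apply: injF_bij => v w fvw; apply/val_inj/eqP.
by rewrite -hdist_eq0 -iso fvw hdistxx.
Qed.
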